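(* Let $k\ge1$ be an integer, assume condition $(\ast)$, and let $\alpha_k=\frac{2k+1}{kb}$. Define $$J(t)=\int_{[0,b]^k}\prod_{i=1}^k g(x_i)\,dx_1\cdots dx_k\int_{\alpha_k\log t\le s_1\le s_2\le\cdots\le s_k\le t}V_0u_1\cdots u_k\,e^{\lambda_0t}\prod_{j=1}^k e^{x_j(t-s_j)}\,ds_1\cdots ds_k,$$ the contribution to $EZ_k(t)$ from first mutation times $s_1\ge\alpha_k\log t$. Then $J(t)=o\!\left(t^{-2k}e^{(\lambda_0+kb)t}\right)$ as $t\to\infty$.
   Context: Here $\lambda_0>0$, $V_0>0$, $u_1,\dots,u_k>0$ are constants, and $g$ is a probability density on $[0,\infty)$. $EZ_k(t)$ (the mean number of type-$k$ cells in the model where $Z_0(t)=V_0e^{\lambda_0t}$ and type-$(j+1)$ cells arise from type-$j$ cells at rate $u_{j+1}$ with birth rate increased by an independent increment of density $g$) equals the same integral with the $s$-region replaced by $0\le s_1\le\cdots\le s_k\le t$. Condition $(\ast)$: for some $b>0$, $g$ vanishes outside $[0,b]$, $g$ is continuous at $b$, $g(b)>0$, and $g\le G$ on $[0,b]$ for some constant $G<\infty$. $f(t)=o(h(t))$ means $f(t)/h(t)\to0$. *)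

From HB Require Import structures.
From mathcomp Require Import all_boot all_order all_algebra.
From mathcomp Require Import all_classical all_reals all_analysis.
Set Implicit Arguments. Unset Strict Implicit. Unset Printing Implicit Defensive.
Import Order.TTheory GRing.Theory Num.Theory.
Import numFieldNormedType.Exports.
Local Open Scope classical_set_scope.
Local Open Scope ring_scope.

Fixpoint box_int {R : realType} (n : nat) (lo hi : R) (F : seq R -> \bar R) : \bar R :=
  match n with
  | 0 => F [::]
  | n'.+1 => (\int[@lebesgue_measure R]_(x in `[lo, hi]) box_int n' lo hi (fun l => F (x :: l)))%E
  end.

Fixpoint simplex_int {R : realType} (n : nat) (lo hi : R) (F : seq R -> \bar R) : \bar R :=
  match n with
  | 0 => F [::]
  | n'.+1 => (\int[@lebesgue_measure R]_(s in `[lo, hi])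
                 simplex_int n' s hi (fun l => F (s :: l)))%E
  end.

Definition alpha {R : realType} (k : nat) (b : R) : R := (2 * k%:R + 1) / (k%:R * b).

(* J(t): x-vector xs = (x_1..x_k) (index j-1 in the list), s-vector ss = (s_1..s_k);
   u_i = u i for i = 1..k. *)
Definition Jint {R : realType} (k : nat) (b lambda0 V0 : R) (u : nat -> R) (g : R -> R)
  (t : R) : \bar R :=
  box_int k 0 b (fun xs =>
    ((\prod_(i < k) g (nth 0 xs i))%:E *
     simplex_int k (alpha k b * ln t) t (fun ss =>
       (V0 * (\prod_(1 <= i < k.+1) u i) * expR (lambda0 * t) *
        \prod_(j < k) expR (nth 0 xs j * (t - nth 0 ss j)))%:E))%E).

(* With a := alpha_k log t and T := t - a, each inner s-integral is
   int_a^t e^(x (t - s)) ds = (e^(x T) - 1) / x, which for 0 <= x <= b is at most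
   psi(T, x) = T e^(b T / 2) + (2 / b) e^(T x).  Integrating against g <= G over
   [0, b] gives Psi(T) = G (b T e^(b T / 2) + 2 e^(b T) / (b T)), hence
   J(t) <= V0 u_1...u_k e^(lambda0 t) Psi(T)^k.  Since b alpha_k >= 2 we have
   e^(b T) t^2 <= e^(b t), and with T >= t / 2 this yields
   Psi(T) t^2 e^(-b t) = O(1 / t); so t^(2k) e^(-(lambda0 + k b) t) J(t) = O(1 / t). *)

From HB Require Import structures.
From mathcomp Require Import all_boot all_order all_algebra.
From mathcomp Require Import all_classical all_reals all_analysis.
From mathcomp Require Import measurable_realfun ring lra.
Import Order.TTheory GRing.Theory Num.Theory.
Import numFieldNormedType.Exports.
Local Open Scope classical_set_scope.
Local Open Scope ring_scope.

Section iterated_integrals.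
Local Open Scope ereal_scope.
Context {R : realType}.
Local Notation mu := (@lebesgue_measure R).

(* Unlike [ge0_le_integral] and [ge0_subset_integral], these two need no
   measurability: the inner iterated integrals are not known to be measurable. *)
Lemma le_ge0_integral (D : set R) (f h : R -> \bar R) :
  (forall x, D x -> 0 <= f x) -> (forall x, D x -> f x <= h x) ->
  \int[mu]_(x in D) f x <= \int[mu]_(x in D) h x.
Proof.
move=> f0 fh.
have h0 x : D x -> 0 <= h x by move=> Dx; exact: le_trans (f0 _ Dx) (fh _ Dx).
rewrite !ge0_integralE//; apply: ereal_sup_le => _ [s /= sf <-].
exists s => //= x; apply: le_trans (sf x) _.
by rewrite /patch; case: ifP => // /set_mem /fh.
Qed.

Lemma subset_ge0_integral (D1 D2 : set R) (f : R -> \bar R) :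
  D1 `<=` D2 -> (forall x, D2 x -> 0 <= f x) ->
  \int[mu]_(x in D1) f x <= \int[mu]_(x in D2) f x.
Proof.
move=> D12 f0.
rewrite !ge0_integralE//; last by move=> x /D12 /f0.
apply: ereal_sup_le => _ [s /= sf <-].
exists s => //= x; apply: le_trans (sf x) _.
rewrite /patch; case: ifP => [/set_mem /D12 D2x|_]; first by rewrite mem_set.
by case: ifP => // /set_mem /f0.
Qed.

Lemma ge0_integralZl_le (D : set R) (c M : R) (f : R -> R) :
  measurable D -> (0 <= c)%R -> (forall x, D x -> 0 <= f x)%R ->
  measurable_fun D f -> \int[mu]_(x in D) (f x)%:E <= M%:E ->
  \int[mu]_(x in D) (c%:E * (f x)%:E) <= (c * M)%:E.
Proof.
move=> mD c0 f0 mf fM; rewrite ge0_integralZl_EFin//.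
- by rewrite EFinM; apply: lee_wpmul2l; rewrite ?lee_fin.
- exact/measurable_EFinP.
Qed.

Lemma simplex_int_ge0 n (lo hi : R) F :
  (forall l, 0 <= F l) -> 0 <= simplex_int n lo hi F.
Proof.
elim: n lo F => [|n IH] lo F F0 /=; first exact: F0.
by apply: integral_ge0 => s _; apply: IH.
Qed.

Lemma box_int_ge0 n (lo hi : R) F :
  (forall l, 0 <= F l) -> 0 <= box_int n lo hi F.
Proof.
elim: n F => [|n IH] F F0 /=; first exact: F0.
by apply: integral_ge0 => s _; apply: IH.
Qed.

Lemma le_box_int n (lo hi : R) F F' : (forall l, 0 <= F l) ->
  (forall l, all (mem `[lo, hi]) l -> F l <= F' l) ->
  box_int n lo hi F <= box_int n lo hi F'.
Proof.
elim: n F F' => [|n IH] F F' F0 FF' /=; first exact: FF'.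
apply: le_ge0_integral => [s _|s /= slohi]; first exact: box_int_ge0.
by apply: IH => // l l_in; apply: FF'; rewrite /= slohi.
Qed.

Lemma prodr_nth_cons (f : nat -> R -> R) n c s l :
  (c * \prod_(j < n.+1) f j (nth 0%R (s :: l) j) =
   c * f 0%N s * \prod_(j < n) f j.+1 (nth 0%R l j))%R.
Proof. by rewrite big_ord_recl /= mulrA. Qed.

Lemma box_int_prod_le n (lo hi c : R) (f : nat -> R -> R) (M : nat -> R) :
  (forall j s, 0 <= f j s)%R -> (forall j, measurable_fun setT (f j)) ->
  (forall j, 0 <= M j)%R -> (0 <= c)%R ->
  (forall j, (j < n)%N -> \int[mu]_(s in `[lo, hi]) (f j s)%:E <= (M j)%:E) ->
  box_int n lo hi (fun l => (c * \prod_(j < n) f j (nth 0%R l j))%:E)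
   <= (c * \prod_(j < n) M j)%:E.
Proof.
elim: n c f M => [|n IH] c f M f0 mf M0 c0 fM /=.
  by rewrite !big_ord0.
set P := (c * \prod_(j < n) M j.+1)%R.
have P0 : (0 <= P)%R by apply: mulr_ge0 => //; apply: prodr_ge0.
apply: (@le_trans _ _ (\int[mu]_(s in `[lo, hi]) (P%:E * (f 0%N s)%:E))).
  apply: le_ge0_integral => s _.
    by apply: box_int_ge0 => l; rewrite lee_fin mulr_ge0// prodr_ge0.
  under eq_fun do rewrite prodr_nth_cons.
  apply: le_trans (IH (c * f 0%N s)%R (fun j => f j.+1) (fun j => M j.+1) _ _ _ _ _) _ => //.
  - exact: mulr_ge0.
  - by move=> j jn; apply: fM.
  - by rewrite -EFinM lee_fin /P mulrAC.
rewrite big_ord_recl mulrCA mulrC -/P.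
apply: ge0_integralZl_le => //; last exact: fM.
exact: measurable_funS (mf 0%N).
Qed.

Lemma simplex_int_prod_le n (lo lo' hi c : R) (f : nat -> R -> R) (M : nat -> R) :
  (forall j s, 0 <= f j s)%R -> (forall j, measurable_fun setT (f j)) ->
  (forall j, 0 <= M j)%R -> (0 <= c)%R -> (lo <= lo')%R ->
  (forall j, (j < n)%N -> \int[mu]_(s in `[lo, hi]) (f j s)%:E <= (M j)%:E) ->
  simplex_int n lo' hi (fun l => (c * \prod_(j < n) f j (nth 0%R l j))%:E)
   <= (c * \prod_(j < n) M j)%:E.
Proof.
elim: n c lo' f M => [|n IH] c lo' f M f0 mf M0 c0 lolo' fM /=.
  by rewrite !big_ord0.
set P := (c * \prod_(j < n) M j.+1)%R.
have P0 : (0 <= P)%R by apply: mulr_ge0 => //; apply: prodr_ge0.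
apply: (@le_trans _ _ (\int[mu]_(s in `[lo', hi]) (P%:E * (f 0%N s)%:E))).
  apply: le_ge0_integral => s.
    by move=> _; apply: simplex_int_ge0 => l; rewrite lee_fin mulr_ge0// prodr_ge0.
  rewrite /= in_itv /= => /andP[lo's _].
  under eq_fun do rewrite prodr_nth_cons.
  apply: le_trans (IH (c * f 0%N s)%R s (fun j => f j.+1) (fun j => M j.+1) _ _ _ _ _ _) _ => //.
  - exact: mulr_ge0.
  - exact: le_trans lo's.
  - by move=> j jn; apply: fM.
  - by rewrite -EFinM lee_fin /P mulrAC.
apply: (@le_trans _ _ (\int[mu]_(s in `[lo, hi]) (P%:E * (f 0%N s)%:E))).
  apply: subset_ge0_integral; first by apply: subset_itvr; rewrite bnd_simp.
  by move=> x _; rewrite -EFinM lee_fin mulr_ge0.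
rewrite big_ord_recl mulrCA mulrC -/P.
apply: ge0_integralZl_le => //; last exact: fM.
exact: measurable_funS (mf 0%N).
Qed.

End iterated_integrals.

Section exponential_integrals.
Context {R : realType}.
Local Notation mu := (@lebesgue_measure R).

Lemma is_derive_expR_affine (c d y : R) :
  is_derive y 1 (fun z => expR (c * z + d)) (expR (c * y + d) * c).
Proof.
have affine : is_derive y (1 : R) (fun z => c * z + d) c.
  have := is_deriveD (is_deriveZ c (is_derive_id y (1 : R))) (is_derive_cst d y 1).
  by rewrite /GRing.scale /= mulr1 addr0.
exact: (is_derive1_comp (f := expR)).
Qed.

Lemma continuous_expR_affine (c d : R) : continuous (fun z => expR (c * z + d)).
Proof.
move=> y; apply/differentiable_continuous/derivable1_diffP.
by case: (is_derive_expR_affine c d y).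
Qed.

Lemma integral_expR_affine (c d p q : R) : c != 0 -> p < q ->
  (\int[mu]_(y in `[p, q]) (expR (c * y + d))%:E =
   ((expR (c * q + d) - expR (c * p + d)) / c)%:E)%E.
Proof.
move=> c0 pq.
have dF (y : R) : is_derive y 1 (fun z => expR (c * z + d) / c) (expR (c * y + d)).
  have -> : (fun z => expR (c * z + d) / c) = c^-1 *: (fun z => expR (c * z + d)).
    by apply: funext => z; rewrite /GRing.scale /= mulrC.
  apply: trigger_derive (is_deriveZ c^-1 (is_derive_expR_affine c d y)) _.
  by rewrite /GRing.scale /= mulrCA mulVf ?mulr1.
have cF : continuous (fun z => expR (c * z + d) / c).
  by move=> y; apply/differentiable_continuous/derivable1_diffP; case: (dF y).
rewrite (@continuous_FTC2 _ _ (fun z => expR (c * z + d) / c)) //.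
- by rewrite -EFinB mulrBl.
- exact/continuous_subspaceT/continuous_expR_affine.
- split; first by move=> y _; case: (dF y).
  + exact/cvg_at_right_filter/cF.
  + exact/cvg_at_left_filter/cF.
- by move=> y _; rewrite derive1E; have [_ ->] := dF y.
Qed.

Lemma integral_itv_cst (K p q : R) : p <= q ->
  (\int[mu]_(y in `[p, q]) K%:E = (K * (q - p))%:E)%E.
Proof.
move=> pq; rewrite integral_cst //= lebesgue_measure_itv /= lte_fin.
have [pq'|qp] := ltP p q; first by rewrite -EFinB -EFinM.
have -> : q = p by apply/eqP; rewrite eq_le pq qp.
by rewrite subrr mulr0 mule0.
Qed.

End exponential_integrals.

Section inner_integral_bounds.
Context {R : realType}.
Local Notation mu := (@lebesgue_measure R).
Variables (b : R) (b0 : 0 < b).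

(* Majorant of [\int_(t - T)^t expR (x * (t - s)) ds] for [0 <= x <= b]: the
   first term covers [x <= b / 2], the second term [x > b / 2]. *)
Definition psi (T x : R) := T * expR (b * T / 2) + 2 / b * expR (T * x).

Definition Psi (G T : R) :=
  G * (b * T * expR (b * T / 2) + 2 * expR (b * T) / (b * T)).

Lemma psi_ge0 T x : 0 <= T -> 0 <= psi T x.
Proof. by move=> T0; rewrite addr_ge0// mulr_ge0// ?expR_ge0// divr_ge0// ltW. Qed.

Lemma Psi_ge0 G T : 0 <= G -> 0 < T -> 0 <= Psi G T.
Proof.
move=> G0 T0; have bT : 0 < b * T by rewrite mulr_gt0.
by rewrite mulr_ge0// addr_ge0// ?mulr_ge0 ?expR_ge0 ?invr_ge0 ?ltW.
Qed.

Lemma continuous_psi T : continuous (psi T).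
Proof.
have -> : psi T = fun y => T * expR (b * T / 2) + 2 / b * expR (T * y + 0).
  by apply: funext => y; rewrite /psi addr0.
move=> y; apply: cvgD; first exact: cvg_cst.
by apply: cvgM; [exact: cvg_cst|exact: continuous_expR_affine].
Qed.

Lemma integral_expR_le_psi (x a t : R) : 0 <= x <= b -> a < t ->
  (\int[mu]_(s in `[a, t]) (expR (x * (t - s)))%:E <= (psi (t - a) x)%:E)%E.
Proof.
move=> /andP[x0 xb] at_.
have [xb2|xb2] := lerP x (b / 2).
  apply: (@le_trans _ _ (\int[mu]_(s in `[a, t]) (expR (b * (t - a) / 2))%:E)%E).
    apply: le_ge0_integral => s; first by move=> _; rewrite lee_fin expR_ge0.
    rewrite /= in_itv /= => /andP[as_ st]; rewrite lee_fin ler_expR.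
    have : 0 <= t - s <= t - a by apply/andP; split; lra.
    by move=> /andP[? ?]; nra.
  rewrite integral_itv_cst; last exact: ltW.
  rewrite lee_fin /psi [_ * (t - a)]mulrC lerDl.
  by rewrite mulr_ge0 ?expR_ge0// divr_ge0// ltW.
have xN0 : - x != 0 by rewrite oppr_eq0 gt_eqF //; lra.
have -> : (fun s => (expR (x * (t - s)))%:E) = (fun s => (expR (- x * s + x * t))%:E).
  by apply: funext => s; rewrite mulrBr mulNr addrC.
rewrite integral_expR_affine // mulNr addNr expR0 lee_fin /psi.
have -> : (1 - expR (- x * a + x * t)) / - x = (expR (x * (t - a)) - 1) / x.
  have -> : - x * a + x * t = x * (t - a) by ring.
  by field; rewrite gt_eqF//; lra.
apply: (@le_trans _ _ (2 / b * expR ((t - a) * x))); last first.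
  by rewrite lerDr mulr_ge0 ?expR_ge0// ltW// subr_gt0.
have E1 : 1 <= expR (x * (t - a)) by rewrite -expR0 ler_expR mulr_ge0//; lra.
have x2b : 1 <= 2 / b * x by rewrite mulrAC ler_pdivlMr // mul1r; lra.
rewrite ler_pdivrMr; last lra.
rewrite [_ * x]mulrC; nra.
Qed.

Lemma integral_psi_le_Psi (T G : R) (g : R -> R) : 0 < T ->
  (forall x, 0 <= g x) -> measurable_fun setT g ->
  (forall x, x \in `[0, b] -> g x <= G) ->
  (\int[mu]_(y in `[0%R, b]) (g y * psi T y)%:E <= (Psi G T)%:E)%E.
Proof.
move=> T0 g0 mg gG.
have G0 : 0 <= G by apply: le_trans (g0 0) (gG 0 _); rewrite in_itv /= lexx ltW.
have psi0 y : 0 <= psi T y by apply: psi_ge0; exact: ltW.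
have mexp : measurable_fun `[0%R, b] (fun y => (expR (T * y + 0))%:E).
  apply/measurable_EFinP.
  exact: measurable_funS (continuous_measurable_fun (continuous_expR_affine T 0)).
apply: (@le_trans _ _ (\int[mu]_(y in `[0%R, b]) (G%:E * (psi T y)%:E))%E).
  apply: le_ge0_integral => y; first by move=> _; rewrite lee_fin mulr_ge0.
  by move=> /gG gyG; rewrite -EFinM lee_fin ler_wpM2r.
rewrite ge0_integralZl_EFin //; last 2 first.
- by move=> y _; rewrite lee_fin.
- apply/measurable_EFinP.
  exact: measurable_funS (continuous_measurable_fun (continuous_psi T)).
have -> : (fun y => (psi T y)%:E) =
    (fun y => (T * expR (b * T / 2))%:E + (2 / b)%:E * (expR (T * y + 0))%:E)%E.
  by apply: funext => y; rewrite /psi addr0 -EFinM -EFinD.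
rewrite ge0_integralD //; last 3 first.
- by move=> y _; rewrite lee_fin mulr_ge0 ?expR_ge0 ?ltW.
- by move=> y _; rewrite -EFinM lee_fin mulr_ge0 ?expR_ge0// divr_ge0// ltW.
- exact: emeasurable_funM.
rewrite ge0_integralZl_EFin //; last by rewrite divr_ge0// ltW.
rewrite integral_itv_cst; last exact: ltW.
rewrite integral_expR_affine //; last exact: lt0r_neq0.
rewrite -!EFinM lee_fin /Psi ler_wpM2l //.
rewrite !addr0 mulr0 expR0 subr0 [T * b]mulrC.
apply: lerD; first by rewrite mulrC mulrA.
rewrite -subr_ge0.
have -> : 2 * expR (b * T) / (b * T) - 2 / b * ((expR (b * T) - 1) / T) = 2 / (b * T).
  by field; apply/andP; split; apply: lt0r_neq0.
by rewrite divr_ge0// mulr_ge0// ltW.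
Qed.

End inner_integral_bounds.

Section asymptotics.
Context {R : realType}.

Lemma pow_div_fact_le_expR (x : R) n : 0 <= x -> x ^+ n.+1 / n.+1`!%:R <= expR x.
Proof. by move=> x0; apply: le_trans (expR_ge1Dxn n x0); rewrite lerDr. Qed.

Lemma ln_le_half (al t : R) : 0 < al -> 1 + 8 * al ^+ 2 <= t -> al * ln t <= t / 2.
Proof.
move=> al0 ht.
have t1 : 1 <= t by have := sqr_ge0 al; nra.
have t0 : 0 < t by lra.
have := pow_div_fact_le_expR (ln t) 1 (ln_ge0 t1).
rewrite lnK ?posrE// (_ : (1.+1)`!%:R = 2)// => lnt2.
have := sqr_ge0 (ln t - 4 * al); nra.
Qed.

Lemma alpha_gt0 (k : nat) (b : R) : (1 <= k)%N -> 0 < b -> 0 < alpha k b.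
Proof.
by move=> k1 b0; rewrite /alpha divr_gt0// ?mulr_gt0// ltr0n.
Qed.

Lemma two_le_mul_alpha (k : nat) (b : R) : (1 <= k)%N -> 0 < b -> 2 <= b * alpha k b.
Proof.
move=> k1 b0; rewrite /alpha.
have k0 : (0 : R) < k%:R by rewrite ltr0n.
have -> : b * ((2 * k%:R + 1) / (k%:R * b)) = (2 * k%:R + 1) / k%:R.
  by field; rewrite !lt0r_neq0.
by rewrite ler_pdivlMr //; lra.
Qed.

Lemma alpha_shift_bounds (k : nat) (b t : R) : (1 <= k)%N -> 0 < b ->
  1 + 8 * alpha k b ^+ 2 <= t ->
  [/\ t / 2 <= t - alpha k b * ln t <= t &
      expR (b * (t - alpha k b * ln t)) * t ^+ 2 <= expR (b * t)].
Proof.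
move=> k1 b0 ht; set al := alpha k b in ht *.
have al0 : 0 < al := alpha_gt0 k b k1 b0.
have t1 : 1 <= t by have := sqr_ge0 al; nra.
have t0 : 0 < t by lra.
have lnt0 : 0 <= ln t := ln_ge0 t1.
have al_ln := ln_le_half al t al0 ht.
split; first by apply/andP; split; [lra|rewrite gerBl mulr_ge0// ltW].
have -> : b * (t - al * ln t) = b * t + - (b * al) * ln t by ring.
rewrite expRD -mulrA ler_piMr ?expR_ge0// -(lnK (exprn_gt0 2 t0)) -expRD.
rewrite -expR0 ler_expR lnXn// -mulr_natl.
by have := two_le_mul_alpha k b k1 b0; rewrite -/al; nra.
Qed.

Lemma Psi_decay (b G t T : R) : 0 < b -> 0 <= G -> 0 < t -> t / 2 <= T <= t ->
  expR (b * T) * t ^+ 2 <= expR (b * t) ->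
  Psi b G T * t ^+ 2 / expR (b * t) <= G * (384 / b ^+ 3 + 4 / b) / t.
Proof.
move=> b0 G0 t0 /andP[tT Tt] ebT.
have T0 : 0 < T by lra.
set H := expR (b * t / 2); have H0 : 0 < H := expR_gt0 _.
have HH : expR (b * t) = H * H by rewrite -expRD; congr expR; field.
have bt4 : (b * t) ^+ 4 <= 384 * H.
  have := pow_div_fact_le_expR (b * t / 2) 3 (divr_ge0 (mulr_ge0 (ltW b0) (ltW t0)) (ler0n R 2)).
  have -> : (3.+1)`!%:R = 24 :> R by [].
  have -> : (b * t) ^+ 4 = 384 * ((b * t / 2) ^+ 4 / 24) by field.
  rewrite -/H; lra.
have HT : expR (b * T / 2) <= H.
  by rewrite ler_expR ler_pM2r// ler_pM2l.
have term1 : b * T * expR (b * T / 2) * t ^+ 2 <= 384 / b ^+ 3 / t * expR (b * t).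
  apply: (@le_trans _ _ (b * t * H * t ^+ 2)).
    rewrite ler_pM2r ?exprn_gt0//.
    by apply: ler_pM; rewrite ?mulr_ge0 ?expR_ge0 ?ler_pM2l// ltW.
  rewrite HH (_ : b * t * H * t ^+ 2 = (b * t) ^+ 4 / (b ^+ 3 * t) * H); last first.
    by field; rewrite !lt0r_neq0.
  rewrite (_ : 384 / b ^+ 3 / t * (H * H) = 384 * H / (b ^+ 3 * t) * H); last first.
    by field; rewrite !lt0r_neq0.
  by rewrite ler_pM2r// ler_pM2r// invr_gt0 mulr_gt0// exprn_gt0.
have term2 : 2 * expR (b * T) / (b * T) * t ^+ 2 <= 4 / b / t * expR (b * t).
  rewrite (_ : _ * t ^+ 2 = 2 / (b * T) * (expR (b * T) * t ^+ 2)); last first.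
    by field; rewrite !lt0r_neq0.
  apply: le_trans (ler_wpM2l _ ebT) _; first by rewrite divr_ge0 ?mulr_ge0 ?ltW.
  rewrite ler_pM2r ?expR_gt0// ler_pdivrMr ?mulr_gt0//.
  rewrite (_ : 4 / b / t * (b * T) = 4 * T / t); last by field; rewrite !lt0r_neq0.
  by rewrite ler_pdivlMr//; lra.
rewrite ler_pdivrMr ?expR_gt0// /Psi.
rewrite (_ : G * (384 / b ^+ 3 + 4 / b) / t * expR (b * t) =
  G * (384 / b ^+ 3 / t * expR (b * t) + 4 / b / t * expR (b * t))); last first.
  by field; rewrite !lt0r_neq0.
by rewrite -mulrA ler_wpM2l// mulrDl lerD.
Qed.

End asymptotics.

Section Jint_bound.
Context {R : realType}.
Variables (k : nat) (lambda0 V0 b G : R) (u : nat -> R) (g : R -> R).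
Hypotheses (V0_gt0 : 0 < V0) (u_gt0 : forall i, (1 <= i <= k)%N -> 0 < u i).
Hypotheses (g_ge0 : forall x, 0 <= g x) (mg : measurable_fun setT g).
Hypotheses (b_gt0 : 0 < b) (g_le : forall x, x \in `[0, b] -> g x <= G).
Hypothesis k_ge1 : (1 <= k)%N.

Let c t := V0 * (\prod_(1 <= i < k.+1) u i) * expR (lambda0 * t).

Let prod_u_gt0 : 0 < \prod_(1 <= i < k.+1) u i.
Proof.
rewrite big_nat_cond; apply: prodr_gt0 => i /andP[/andP[i1 ik] _].
by rewrite u_gt0// i1 -ltnS.
Qed.

Let c_ge0 t : 0 <= c t.
Proof. by rewrite mulr_ge0 ?expR_ge0// mulr_ge0 ?ltW. Qed.

Let G_ge0 : 0 <= G.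
Proof. by apply: le_trans (g_ge0 0) (g_le 0 _); rewrite in_itv /= lexx ltW. Qed.

Lemma Jint_le_Psi t : alpha k b * ln t < t ->
  (Jint k b lambda0 V0 u g t <= (c t * Psi b G (t - alpha k b * ln t) ^+ k)%:E)%E.
Proof.
rewrite /Jint; set a := alpha k b * ln t; set T := t - a => at_.
have T0 : 0 < T by rewrite subr_gt0.
have psi0 y : 0 <= psi b T y by apply: psi_ge0 => //; exact: ltW.
have Psi0 : 0 <= Psi b G T by apply: Psi_ge0.
have -> : Psi b G T ^+ k = \prod_(j < k) Psi b G T by rewrite prodr_const card_ord.
apply: le_trans (box_int_prod_le k 0 b (c t) (fun _ y => g y * psi b T y)
  (fun _ => Psi b G T) _ _ _ (c_ge0 t) _); first last.
- by move=> j _; exact: integral_psi_le_Psi.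
- by move=> j.
- move=> j; apply: measurable_funM => //.
  exact: continuous_measurable_fun (continuous_psi b T).
- by move=> j y; rewrite mulr_ge0.
apply: le_box_int => xs.
  rewrite mule_ge0 ?lee_fin ?prodr_ge0// simplex_int_ge0// => l.
  by rewrite lee_fin mulr_ge0 ?c_ge0// prodr_ge0// => j _; rewrite expR_ge0.
move=> /(all_nthP 0) xs_in.
have nth_in (j : 'I_k) : 0 <= nth 0 xs j <= b.
  have [jxs|xsj] := ltnP j (size xs); last by rewrite nth_default// lexx ltW.
  exact: xs_in.
have simplex_bound := simplex_int_prod_le k a a t (c t)
  (fun j s => expR (nth 0 xs j * (t - s))) (fun j => psi b T (nth 0 xs j)).
apply: le_trans (lee_wpmul2l _ (simplex_bound _ _ _ (c_ge0 t) (lexx a) _)) _.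
- by rewrite lee_fin prodr_ge0.
- by move=> j s; rewrite expR_ge0.
- move=> j; apply: continuous_measurable_fun.
  have -> : (fun s => expR (nth 0 xs j * (t - s))) =
      (fun s => expR (- nth 0 xs j * s + nth 0 xs j * t)).
    by apply: funext => s; rewrite mulrBr mulNr addrC.
  exact: continuous_expR_affine.
- by move=> j.
- by move=> j jk; apply: (integral_expR_le_psi _ b_gt0); rewrite ?(nth_in (Ordinal jk)).
- by rewrite -EFinM lee_fin big_split /= mulrCA.
Qed.

Lemma Jint_ge0 t : (0 <= Jint k b lambda0 V0 u g t)%E.
Proof.
apply: box_int_ge0 => xs; rewrite mule_ge0 ?lee_fin ?prodr_ge0// simplex_int_ge0// => l.
by rewrite lee_fin mulr_ge0 ?c_ge0// prodr_ge0// => j _; rewrite expR_ge0.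
Qed.

Lemma Jint_normalized_le t :
  1 + 8 * alpha k b ^+ 2 + G * (384 / b ^+ 3 + 4 / b) <= t ->
  (Jint k b lambda0 V0 u g t *
     (t ^+ (2 * k) / expR ((lambda0 + k%:R * b) * t))%:E <=
   (V0 * \prod_(1 <= i < k.+1) u i * (G * (384 / b ^+ 3 + 4 / b)) / t)%:E)%E.
Proof.
set K := G * _ => ht.
have K0 : 0 <= K by rewrite mulr_ge0// addr_ge0// divr_ge0// ?exprn_ge0// ltW.
have ht' : 1 + 8 * alpha k b ^+ 2 <= t by lra.
have t1 : 1 <= t by have := sqr_ge0 (alpha k b); lra.
have [/andP[tT Tt] ebT] := alpha_shift_bounds k b t k_ge1 b_gt0 ht'.
set T := t - alpha k b * ln t in tT Tt ebT.
have at_ : alpha k b * ln t < t by rewrite /T in tT; lra.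
apply: le_trans (lee_wpmul2r _ (Jint_le_Psi t at_)) _.
  by rewrite lee_fin divr_ge0 ?expR_ge0// exprn_ge0//; lra.
set r := Psi b G T * t ^+ 2 / expR (b * t).
have r_le : r <= K / t by apply: Psi_decay => //; lra.
have r0 : 0 <= r by rewrite divr_ge0 ?expR_ge0// mulr_ge0 ?exprn_ge0 ?Psi_ge0//; lra.
rewrite -/T -EFinM lee_fin.
have -> : c t * Psi b G T ^+ k * (t ^+ (2 * k) / expR ((lambda0 + k%:R * b) * t)) =
    V0 * \prod_(1 <= i < k.+1) u i * r ^+ k.
  rewrite /r expr_div_n (exprMn k (Psi b G T)) -exprM.
  have -> : (lambda0 + k%:R * b) * t = lambda0 * t + k%:R * (b * t) by ring.
  rewrite /c expRD expRM_natl; field.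
  by rewrite expf_neq0 ?lt0r_neq0 ?expR_gt0.
have r_le1 : r <= 1.
  apply: le_trans r_le _; rewrite ler_pdivrMr ?mul1r//; last lra.
  by have := sqr_ge0 (alpha k b); lra.
rewrite -[_ * K / t]mulrA; apply: ler_wpM2l; first by rewrite mulr_ge0// ltW.
exact: (le_trans (ler_iXnr k_ge1 r0 r_le1) r_le).
Qed.

End Jint_bound.

Lemma cvge_div_pinfty {R : realType} (c : R) :
  (fun t => (c / t)%:E) @ +oo --> 0%E.
Proof.
apply: cvg_EFin; first by near=> t.
have inv0 : (fun t : R => t^-1) @ +oo --> 0.
  apply/(@gtr0_cvgV0 _ _ _ _ id); last exact: cvg_id.
  by apply: nbhs_pinfty_gt; rewrite num_real.
by have := cvgMl_tmp (a := c) inv0; rewrite mulr0 => cinv0; exact: cinv0.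
Unshelve. all: by end_near. Qed.

Theorem lemma4 (R : realType) (k : nat) (lambda0 V0 b G : R) (u : nat -> R) (g : R -> R) :
  (1 <= k)%N ->
  0 < lambda0 -> 0 < V0 ->
  (forall i, (1 <= i <= k)%N -> 0 < u i) ->
  (forall x, 0 <= g x) ->
  measurable_fun setT g ->
  (\int[@lebesgue_measure R]_(x in `[0%R, +oo[) (g x)%:E)%E = 1%E ->
  0 < b ->
  (forall x, x \notin `[0, b] -> g x = 0) ->
  g x @[x --> b^'-] --> g b ->
  0 < g b ->
  (forall x, x \in `[0, b] -> g x <= G) ->
  (fun t => Jint k b lambda0 V0 u g t *
            ((t ^+ (2 * k))%R / expR ((lambda0 + k%:R * b) * t))%:E)%E
    @ +oo --> 0%E.
Proof.
move=> k1 _ V00 u0 g0 mg _ b0 _ _ _ gG.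
set K := G * (384 / b ^+ 3 + 4 / b).
apply: (@squeeze_cvge _ _ _ _ (cst 0%E) _
  (fun t => (V0 * \prod_(1 <= i < k.+1) u i * K / t)%:E)); last 2 first.
- exact: cvg_cst.
- exact: cvge_div_pinfty.
near=> t; apply/andP; split.
  by rewrite mule_ge0 ?Jint_ge0// lee_fin divr_ge0 ?expR_ge0// exprn_even_ge0// oddM.
apply: (Jint_normalized_le _ _ _ _ _ _ _ V00 u0 g0 mg b0 gG k1); near: t.
by apply: nbhs_pinfty_ge; rewrite num_real.
Unshelve. all: by end_near. Qed.
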